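(* Let $n,d\ge1$, $\omega\ge0$, $\alpha\in(0,1]$, $K_\omega,K_\alpha\in(0,d]$, and $0<\mu\le L\le L_{\max}$. For $r\in[0,1]$ put $K^r=(1-r)K_\omega+rK_\alpha$, $\mu^r_{\omega,\alpha}=rd/K^r$, $$\mathfrak m^r_{\mathrm{EF21\text{-}P+DIANA}}=K^r\Big(\frac{L}{\alpha\mu}+\frac{\omega L_{\max}}{n\mu}+\omega\Big)+d,$$ $$\mathfrak m^r_{\mathrm{realistic}}=K^r\Big(\sqrt{\tfrac{L\max\{\omega+1,\mu^r_{\omega,\alpha}\}}{\alpha\mu}}+\sqrt{\tfrac{L_{\max}\omega\max\{\omega+1,\mu^r_{\omega,\alpha}\}}{n\mu}}+\tfrac1\alpha+\omega+\mu^r_{\omega,\alpha}\Big)+d.$$ Then for all $r\in[0,1]$, $\mathfrak m^r_{\mathrm{realistic}}=\widetilde{\mathcal O}\big(\mathfrak m^r_{\mathrm{EF21\text{-}P+DIANA}}\big)$, i.e. $\mathfrak m^r_{\mathrm{realistic}}\le C\,\mathfrak m^r_{\mathrm{EF21\text{-}P+DIANA}}$ for a universal constant $C$ (up to logarithmic factors).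
   Context: $\mathfrak m^r_{\mathrm{EF21\text{-}P+DIANA}}$ is (up to logarithmic factors) the total communication complexity of the previous method EF21-P + DIANA, and $\mathfrak m^r_{\mathrm{realistic}}$ is (up to logarithmic factors) that of the new method 2Direction with its hyper-parameters chosen without knowledge of $L_{\max}/L$, for minimizing $f=\frac1n\sum_i f_i$ on $\mathbb R^d$ with $n$ workers, each $f_i$ being $L_i$-smooth and convex, $L_{\max}=\max_iL_i$, $f$ being $L$-smooth and $\mu$-strongly convex. $\omega$ and $K_\omega$ are the variance parameter and expected density of the worker (unbiased) compressors, $\alpha$ and $K_\alpha$ the contraction parameter and expected density of the server (biased) compressor, and the total communication complexity is $(1-r)\cdot(\text{worker-to-server cost})+r\cdot(\text{server-to-worker cost})$. *)

From mathcomp Require Import all_boot all_order all_algebra.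
Set Implicit Arguments. Unset Strict Implicit. Unset Printing Implicit Defensive.
Import Order.TTheory GRing.Theory Num.Theory.
Local Open Scope ring_scope.

Section Defs.
Variable R : rcfType.

Definition Kr (Kw Ka r : R) : R := (1 - r) * Kw + r * Ka.

Definition mu_r (d : nat) (Kw Ka r : R) : R := r * d%:R / Kr Kw Ka r.

Definition m_EF21P_DIANA (n d : nat) (w a Kw Ka mu L Lmax r : R) : R :=
  Kr Kw Ka r * (L / (a * mu) + w * Lmax / (n%:R * mu) + w) + d%:R.

Definition m_realistic (n d : nat) (w a Kw Ka mu L Lmax r : R) : R :=
  let M := Num.max (w + 1) (mu_r d Kw Ka r) in
  Kr Kw Ka r *
    (Num.sqrt (L * M / (a * mu))
     + Num.sqrt (Lmax * w * M / (n%:R * mu))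
     + a^-1 + w + mu_r d Kw Ka r) + d%:R.
End Defs.

From mathcomp Require Import all_boot all_order all_algebra.
From mathcomp Require Import lra.

Set Implicit Arguments.
Unset Strict Implicit.
Unset Printing Implicit Defensive.
Import Order.TTheory GRing.Theory Num.Theory.
Local Open Scope ring_scope.

(* Both square roots in m_realistic are of the form sqrt(X * M), where
   M = max(w + 1, mu_r) and X is one of the ratios L/(a mu), w Lmax/(n mu)
   occurring in m_EF21P_DIANA; hence sqrt(X * M) <= X + M.  Moreover
   1/a <= L/(a mu) and M <= w + 1 + mu_r, while K^r <= d and K^r mu_r = r d <= d,
   so every extra term is paid for by K^r (L/(a mu) + w Lmax/(n mu) + w) + d,
   and C = 6 suffices. *)

Lemma sqrtr_mul_le_add (R : rcfType) (x y : R) : 0 <= x -> 0 <= y ->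
  Num.sqrt (x * y) <= x + y.
Proof.
move=> x_ge0 y_ge0; have xy_ge0 : 0 <= x + y by lra.
rewrite -[leRHS]ger0_norm // -sqrtr_sqr ler_sqrt ?sqr_ge0 // expr2.
have := mulr_ge0 x_ge0 y_ge0; nra.
Qed.

Lemma maxr_le_add (R : realDomainType) (x y : R) :
  0 <= x -> 0 <= y -> Num.max x y <= x + y.
Proof. by move=> x_ge0 y_ge0; rewrite ge_max; apply/andP; split; lra. Qed.

Section CompressionDensity.
Variables (R : rcfType) (d : nat) (Kw Ka r : R).
Hypotheses (Kw_gt0 : 0 < Kw) (Ka_gt0 : 0 < Ka) (r_ge0 : 0 <= r) (r_le1 : r <= 1).

Lemma Kr_ge (m : R) : m <= Kw -> m <= Ka -> m <= Kr Kw Ka r.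
Proof.
move=> m_le_Kw m_le_Ka; rewrite /Kr.
have : 0 <= (1 - r) * (Kw - m) by rewrite mulr_ge0 // subr_ge0.
have : 0 <= r * (Ka - m) by rewrite mulr_ge0 // subr_ge0.
lra.
Qed.

Lemma Kr_le (D : R) : Kw <= D -> Ka <= D -> Kr Kw Ka r <= D.
Proof.
move=> Kw_le_D Ka_le_D; rewrite /Kr.
have : 0 <= (1 - r) * (D - Kw) by rewrite mulr_ge0 // subr_ge0.
have : 0 <= r * (D - Ka) by rewrite mulr_ge0 // subr_ge0.
lra.
Qed.

Lemma Kr_gt0 : 0 < Kr Kw Ka r.
Proof.
apply: (@lt_le_trans _ _ (Num.min Kw Ka)); first by rewrite lt_min Kw_gt0.
by apply: Kr_ge; rewrite ge_min lexx ?orbT.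
Qed.

Lemma mu_r_ge0 : 0 <= mu_r d Kw Ka r.
Proof. by rewrite /mu_r divr_ge0 ?mulr_ge0 ?ler0n // ltW // Kr_gt0. Qed.

Lemma Kr_mu_r : Kr Kw Ka r * mu_r d Kw Ka r = r * d%:R.
Proof. by rewrite /mu_r mulrC divfK // gt_eqF ?Kr_gt0. Qed.

End CompressionDensity.

Lemma invf_le_div_mul (R : realFieldType) (a mu L : R) :
  0 < a -> 0 < mu -> mu <= L -> a^-1 <= L / (a * mu).
Proof.
move=> a_gt0 mu_gt0 muL.
by rewrite invfM mulrCA ler_pMr ?invr_gt0 // ler_pdivlMr // mul1r.
Qed.

Section RealisticBound.
Variables (R : rcfType) (n d : nat) (w a Kw Ka mu L Lmax r : R).
Hypotheses (w_ge0 : 0 <= w) (a_gt0 : 0 < a).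
Hypotheses (Kw_gt0 : 0 < Kw) (Ka_gt0 : 0 < Ka) (r_ge0 : 0 <= r) (r_le1 : r <= 1).
Hypotheses (mu_gt0 : 0 < mu) (mu_le_L : mu <= L) (L_le_Lmax : L <= Lmax).

Let a_ge0 : 0 <= a. Proof. exact: ltW. Qed.
Let mu_ge0 : 0 <= mu. Proof. exact: ltW. Qed.
Let L_ge0 : 0 <= L. Proof. exact: le_trans mu_le_L. Qed.
Let Lmax_ge0 : 0 <= Lmax. Proof. exact: le_trans L_le_Lmax. Qed.

Lemma L_div_ge0 : 0 <= L / (a * mu).
Proof. by rewrite divr_ge0 ?mulr_ge0. Qed.

Lemma wLmax_div_ge0 : 0 <= w * Lmax / (n%:R * mu).
Proof. by rewrite divr_ge0 ?mulr_ge0 ?ler0n. Qed.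

Lemma m_realistic_le :
  m_realistic n d w a Kw Ka mu L Lmax r <=
    Kr Kw Ka r * (2 * (L / (a * mu)) + w * Lmax / (n%:R * mu) + 3 * w + 2)
    + 3 * (r * d%:R) + d%:R.
Proof.
rewrite /m_realistic -(Kr_mu_r d Kw_gt0 Ka_gt0 r_ge0 r_le1).
set K := Kr _ _ _; set mr := mu_r _ _ _ _; set M := Num.max _ _.
set X := L / (a * mu); set W := w * Lmax / (n%:R * mu).
have mr_ge0 : 0 <= mr by exact: mu_r_ge0.
have M_ge0 : 0 <= M by rewrite le_max addr_ge0 ?ler01.
have M_le : M <= w + 1 + mr by rewrite maxr_le_add ?addr_ge0 ?ler01.
have sqrt1 : Num.sqrt (L * M / (a * mu)) <= X + M.
  by rewrite mulrAC sqrtr_mul_le_add ?L_div_ge0.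
have sqrt2 : Num.sqrt (Lmax * w * M / (n%:R * mu)) <= W + M.
  by rewrite mulrAC [Lmax * w]mulrC sqrtr_mul_le_add ?wLmax_div_ge0.
have inv_a : a^-1 <= X by exact: invf_le_div_mul.
rewrite lerD2r [3 * (K * _)]mulrCA -mulrDr ler_pM2l ?Kr_gt0 //.
lra.
Qed.

Lemma m_realistic_le_m_EF21P_DIANA : Kw <= d%:R -> Ka <= d%:R ->
  m_realistic n d w a Kw Ka mu L Lmax r
    <= 6%:R * m_EF21P_DIANA n d w a Kw Ka mu L Lmax r.
Proof.
move=> Kw_le Ka_le; apply: le_trans m_realistic_le _.
rewrite /m_EF21P_DIANA.
set K := Kr _ _ _; set X := L / (a * mu); set W := w * Lmax / (n%:R * mu).
have K_ge0 : 0 <= K by exact/ltW/Kr_gt0.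
have K_le : K <= d%:R by exact: Kr_le.
have rd_le : r * d%:R <= d%:R :> R by exact: ler_piMl.
have KX_ge0 : 0 <= K * X by rewrite mulr_ge0 ?L_div_ge0.
have KW_ge0 : 0 <= K * W by rewrite mulr_ge0 ?wLmax_div_ge0.
have Kw_ge0 : 0 <= K * w by exact: mulr_ge0.
lra.
Qed.

End RealisticBound.

Theorem theorem4 :
  exists C : nat, forall (R : rcfType) (n d : nat) (w a Kw Ka mu L Lmax : R),
    (1 <= n)%N -> (1 <= d)%N -> 0 <= w -> 0 < a -> a <= 1 ->
    0 < Kw -> Kw <= d%:R -> 0 < Ka -> Ka <= d%:R ->
    0 < mu -> mu <= L -> L <= Lmax ->
    forall r : R, 0 <= r -> r <= 1 ->
      m_realistic n d w a Kw Ka mu L Lmax r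
        <= C%:R * m_EF21P_DIANA n d w a Kw Ka mu L Lmax r.
Proof.
exists 6%N => R n d w a Kw Ka mu L Lmax _ _ w_ge0 a_gt0 _ Kw_gt0 Kw_le
  Ka_gt0 Ka_le mu_gt0 mu_le_L L_le_Lmax r r_ge0 r_le1.
exact: m_realistic_le_m_EF21P_DIANA.
Qed.
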